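(* In the setting of the context, for every $g_0\in F_{xz}$ and $g_1\in F_{yz}$ we have $|g_1^{-1}g_0|_{S_1}\ge f(|g_0|_{S_1})$.
   Context: $H$ is a finitely presented group with finite generating set $T$, containing a free subgroup $F$ of rank $p$ with free basis $R=\{d_1,\dots,d_p\}\subset T$ (standing assumption: $\mathrm{Dist}_F^H$ admits an exponentially bounded sequence of palindromic certificates in $F$). $F_x,F_y,F_z$ are free of rank $p$ with bases $R_x=\{x_i\},R_y=\{y_i\},R_z=\{z_i\}$. $G_1=[H\ast_{\langle d_i=x_iy_i^{-1}\rangle}(F_x\times F_y\times F_z)]\times\langle s_1\rangle$; $a_i=x_iz_i$, $b_i=y_iz_i$, $R_{xz}=\{a_i\}$, $R_{yz}=\{b_i\}$, $F_{xz}=\langle R_{xz}\rangle$, $F_{yz}=\langle R_{yz}\rangle$; $S_1=T\cup R_x\cup R_y\cup R_z\cup R_{xz}\cup R_{yz}\cup\{s_1\}$. $\mathrm{Dist}_F^H(n)=\max\{|g|_R:g\in F,|g|_T\le n\}$ (linearly interpolated). $f=\Delta^{-1}$, where $\Delta:[0,\infty)\to[0,\infty)$ is a non-decreasing bijection Lipschitz equivalent to $\mathrm{Dist}_F^H$ with $\Delta(r)\ge r$ for $r\ge1$ and $f(|g|_R)\le|g|_T$ for every $g\in F$ (Lipschitz equivalence: $\exists M\ge1$ with $g(r)\le Mf(Mr)$, $f(r)\le Mg(Mr)$ for $r\ge1$). *)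

From Stdlib Require Import Reals Lra Lia List.
Open Scope R_scope.

Record Grp := {
  car :> Type;
  gmul : car -> car -> car;
  ginv : car -> car;
  gone : car;
  gmulA : forall a b c, gmul a (gmul b c) = gmul (gmul a b) c;
  gmul1l : forall a, gmul gone a = a;
  gmulVl : forall a, gmul (ginv a) a = gone
}.
Arguments gmul {g} _ _.
Arguments ginv {g} _.
Arguments gone {g}.

Record Hom (G L : Grp) := {
  hfun :> G -> L;
  hmul : forall a b, hfun (gmul a b) = gmul (hfun a) (hfun b)
}.

(* A word is a list of letters (u, b): u a generator, b = true for u,
   b = false for u^{-1}. *)
Definition letter_val {G : Grp} (l : G * bool) : G :=
  if snd l then fst l else ginv (fst l).

Definition word_eval {G : Grp} (w : list (G * bool)) : G :=
  fold_right (fun l acc => gmul (letter_val l) acc) gone w.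

Definition word_reach {G : Grp} (S : G -> Prop) (g : G) (n : nat) : Prop :=
  exists w : list (G * bool),
    length w = n /\ Forall (fun l => S (fst l)) w /\ word_eval w = g.

Definition word_len {G : Grp} (S : G -> Prop) (g : G) (n : nat) : Prop :=
  word_reach S g n /\ forall m, word_reach S g m -> (n <= m)%nat.

Definition word_len_le {G : Grp} (S : G -> Prop) (g : G) (n : nat) : Prop :=
  exists m, (m <= n)%nat /\ word_reach S g m.

Definition in_gen {G : Grp} (S : G -> Prop) (g : G) : Prop :=
  exists n, word_reach S g n.

Definition generates {G : Grp} (S : G -> Prop) : Prop :=
  forall g : G, in_gen S g.

Definition finite_set {G : Grp} (S : G -> Prop) : Prop :=
  exists l : list G, forall u, S u <-> In u l.

(* H is finitely presented on the finite generating set T: there is a finite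
   list of relators (words in T) such that every map of T into a group L
   killing the relators extends to a homomorphism H -> L. *)
Definition fin_presented (H : Grp) (T : H -> Prop) : Prop :=
  finite_set T /\ generates T /\
  exists rels : list (list (H * bool)),
    Forall (fun w => Forall (fun l => T (fst l)) w /\ word_eval w = gone) rels /\
    forall (L : Grp) (phi : H -> L),
      Forall (fun w => word_eval (map (fun l => (phi (fst l), snd l)) w) = gone) rels ->
      exists psi : Hom H L, forall t, T t -> psi t = phi t.

Definition idx_eval {G : Grp} (d : nat -> G) (w : list (nat * bool)) : G :=
  word_eval (map (fun l => (d (fst l), snd l)) w).

Fixpoint reduced (w : list (nat * bool)) : Prop :=
  match w with
  | nil => True
  | (i, b) :: w' =>
      match w' with
      | nil => True
      | (j, c) :: _ => ~ (i = j /\ b <> c) /\ reduced w'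
      end
  end.

Definition free_family {G : Grp} (p : nat) (d : nat -> G) : Prop :=
  forall w : list (nat * bool),
    Forall (fun l => (fst l < p)%nat) w -> reduced w -> idx_eval d w = gone ->
    w = nil.

Definition set_of_family {G : Grp} (p : nat) (d : nat -> G) : G -> Prop :=
  fun u => exists i, (i < p)%nat /\ u = d i.

(* G1 together with iota : H -> G1, x_i, y_i, z_i, s1 is
   [H *_{d_i = x_i y_i^{-1}} (F_x x F_y x F_z)] x <s1>, characterised by its
   presentation / universal property:
   generators H, x_i, y_i, z_i, s1; relations those of H,
   d_i = x_i y_i^{-1}, [x_i,y_j] = [x_i,z_j] = [y_i,z_j] = 1,
   s1 central. *)
Definition G1_relations {H L : Grp} (p : nat) (d : nat -> H) (phi : H -> L)
    (X Y Z : nat -> L) (s : L) : Prop :=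
  (forall i, (i < p)%nat -> phi (d i) = gmul (X i) (ginv (Y i))) /\
  (forall i j, (i < p)%nat -> (j < p)%nat ->
     gmul (X i) (Y j) = gmul (Y j) (X i) /\
     gmul (X i) (Z j) = gmul (Z j) (X i) /\
     gmul (Y i) (Z j) = gmul (Z j) (Y i)) /\
  (forall h : H, gmul s (phi h) = gmul (phi h) s) /\
  (forall i, (i < p)%nat ->
     gmul s (X i) = gmul (X i) s /\ gmul s (Y i) = gmul (Y i) s /\
     gmul s (Z i) = gmul (Z i) s).

Definition is_G1 (H : Grp) (p : nat) (d : nat -> H) (G1 : Grp) (iota : Hom H G1)
    (X Y Z : nat -> G1) (s1 : G1) : Prop :=
  G1_relations p d iota X Y Z s1 /\
  forall (L : Grp) (phi : Hom H L) (X' Y' Z' : nat -> L) (s' : L),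
    G1_relations p d phi X' Y' Z' s' ->
    (exists psi : Hom G1 L,
        (forall h, psi (iota h) = phi h) /\
        (forall i, (i < p)%nat -> psi (X i) = X' i /\ psi (Y i) = Y' i /\
                                  psi (Z i) = Z' i) /\
        psi s1 = s') /\
    (forall psi1 psi2 : Hom G1 L,
        (forall h, psi1 (iota h) = phi h) ->
        (forall i, (i < p)%nat -> psi1 (X i) = X' i /\ psi1 (Y i) = Y' i /\
                                  psi1 (Z i) = Z' i) ->
        psi1 s1 = s' ->
        (forall h, psi2 (iota h) = phi h) ->
        (forall i, (i < p)%nat -> psi2 (X i) = X' i /\ psi2 (Y i) = Y' i /\
                                  psi2 (Z i) = Z' i) ->
        psi2 s1 = s' ->
        forall g, psi1 g = psi2 g).

Definition S1_set {H G1 : Grp} (T : H -> Prop) (p : nat) (iota : H -> G1)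
    (X Y Z : nat -> G1) (s1 : G1) : G1 -> Prop :=
  fun u =>
    (exists t, T t /\ u = iota t) \/
    (exists i, (i < p)%nat /\
       (u = X i \/ u = Y i \/ u = Z i \/ u = gmul (X i) (Z i) \/
        u = gmul (Y i) (Z i))) \/
    u = s1.

Definition is_dist {H : Grp} (T R : H -> Prop) (D : nat -> nat) : Prop :=
  forall n : nat,
    (exists g, in_gen R g /\ word_len_le T g n /\ word_len R g (D n)) /\
    (forall g k, in_gen R g -> word_len_le T g n -> word_len R g k -> (k <= D n)%nat).

Definition interp (D : nat -> nat) (r : R) : R :=
  let k := Z.to_nat (Int_part r) in
  INR (D k) + (r - INR k) * (INR (D (S k)) - INR (D k)).

Definition lip_equiv (g f : R -> R) : Prop :=
  exists M : R, 1 <= M /\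
    forall r, 1 <= r -> g r <= M * f (M * r) /\ f r <= M * g (M * r).

From Stdlib Require Import Reals List Lra Lia Classical Wf_nat.
Open Scope R_scope.

(* Let psi : G1 -> H be the retraction that is the identity on H, sends x_i to
   d_i and kills y_i, z_i and s1.  Then psi a_i = d_i, psi b_i = 1, and psi
   maps every letter of S1 into T or to 1, so h := psi (g1^-1 g0) = psi g0
   satisfies |h|_T <= |g1^-1 g0|_S1.  Because the d_i are free, every R-word
   for h is the psi-image of the same word in the a_i, which then spells g0;
   hence |g0|_S1 <= |h|_R.  As f is nondecreasing and f(|h|_R) <= |h|_T,
   f(|g0|_S1) <= f(|h|_R) <= |h|_T <= |g1^-1 g0|_S1. *)

Section GroupLaws.
Variable G : Grp.
Implicit Types a b c : G.

Lemma mulgV a : gmul a (ginv a) = gone.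
Proof.
  rewrite <- (gmul1l G (gmul a (ginv a))), <- (gmulVl G (ginv a)) at 1.
  rewrite <- gmulA, (gmulA G (ginv a) a (ginv a)), gmulVl, gmul1l.
  apply gmulVl.
Qed.

Lemma mulg1 a : gmul a gone = a.
Proof. rewrite <- (gmulVl G a), gmulA, mulgV. apply gmul1l. Qed.

Lemma ginv_unique a b : gmul a b = gone -> a = ginv b.
Proof.
  intro Hab. rewrite <- (mulg1 a), <- (mulgV b), gmulA, Hab. apply gmul1l.
Qed.

Lemma invg1 : ginv (@gone G) = gone.
Proof. symmetry. apply ginv_unique, gmul1l. Qed.

Lemma invgK a : ginv (ginv a) = a.
Proof. symmetry. apply ginv_unique, mulgV. Qed.

Lemma invMg a b : ginv (gmul a b) = gmul (ginv b) (ginv a).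
Proof.
  symmetry. apply ginv_unique.
  rewrite <- gmulA, (gmulA G (ginv a) a b), gmulVl, gmul1l. apply gmulVl.
Qed.

Lemma mulgI a b c : gmul a b = gmul a c -> b = c.
Proof.
  intro E. rewrite <- (gmul1l G b), <- (gmul1l G c), <- (gmulVl G a), <- !gmulA, E.
  reflexivity.
Qed.

Lemma letter_val_one (s : bool) : letter_val (@gone G, s) = gone.
Proof. destruct s; [reflexivity | apply invg1]. Qed.

End GroupLaws.

Section Morphisms.
Variables G L : Grp.
Variable psi : Hom G L.

Lemma morph1 : psi gone = gone.
Proof. apply (mulgI L (psi gone)). rewrite <- hmul, gmul1l, mulg1. reflexivity. Qed.

Lemma morphV x : psi (ginv x) = ginv (psi x).
Proof. apply ginv_unique. rewrite <- hmul, gmulVl. apply morph1. Qed.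

Lemma morph_letter_val u (s : bool) : psi (letter_val (u, s)) = letter_val (psi u, s).
Proof. destruct s; [reflexivity | apply morphV]. Qed.

Lemma morph_in_gen_trivial (S : G -> Prop) g :
  (forall u, S u -> psi u = gone) -> in_gen S g -> psi g = gone.
Proof.
  intros HS [n [w [_ [HF <-]]]]. clear n.
  induction HF as [|[u s] w Hu HF IH]; [apply morph1|].
  simpl word_eval. rewrite hmul, IH, morph_letter_val, (HS u Hu), letter_val_one.
  apply gmul1l.
Qed.

Lemma morph_word_len_le (S : G -> Prop) (T : L -> Prop) g n :
  (forall u, S u -> T (psi u) \/ psi u = gone) ->
  word_reach S g n -> word_len_le T (psi g) n.
Proof.
  intros HST [w [<- [HF <-]]].
  induction HF as [|[u s] w Hu HF [m [Hm [w' [Hw'len [Hw'F Hw'val]]]]]].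
  - exists 0%nat. split; [lia|]. exists nil. split; [reflexivity|].
    split; [constructor | symmetry; apply morph1].
  - simpl word_eval. rewrite hmul, morph_letter_val.
    destruct (HST u Hu) as [HT | H1].
    + exists (Datatypes.S m). split; [simpl; lia|]. exists ((psi u, s) :: w').
      split; [simpl; congruence|]. split; [constructor; assumption|].
      simpl. rewrite Hw'val. reflexivity.
    + exists m. split; [simpl; lia|].
      rewrite H1, letter_val_one, gmul1l. exists w'. auto.
Qed.

End Morphisms.

Lemma word_len_exists {G : Grp} (S : G -> Prop) g m :
  word_reach S g m -> exists n, word_len S g n /\ (n <= m)%nat.
Proof.
  intro Hm.
  destruct (dec_inh_nat_subset_has_unique_least_element (word_reach S g))
    as [n [[Hn Hmin] _]]; [intro; apply classic | eauto |].
  exists n. split; [split|]; auto.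
Qed.

Lemma inverse_nondecreasing (Delta f : R -> R) :
  (forall r s, 0 <= r -> r <= s -> Delta r <= Delta s) ->
  (forall y, 0 <= y -> 0 <= f y) ->
  (forall y, 0 <= y -> Delta (f y) = y) ->
  forall y1 y2, 0 <= y1 -> y1 <= y2 -> f y1 <= f y2.
Proof.
  intros HDmono Hfpos HDf y1 y2 H1 H2.
  destruct (Rle_dec (f y1) (f y2)) as [|Hlt]; [assumption|].
  assert (Delta (f y2) <= Delta (f y1)) by (apply HDmono; [apply Hfpos | ]; lra).
  rewrite !HDf in * by lra. replace y2 with y1 in Hlt by lra. lra.
Qed.

Section IndexWords.
Implicit Types u v w : list (nat * bool).

Lemma idx_eval_cons {G : Grp} (c : nat -> G) l w :
  idx_eval c (l :: w) = gmul (letter_val (c (fst l), snd l)) (idx_eval c w).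
Proof. reflexivity. Qed.

Lemma idx_eval_morph {G L : Grp} (psi : Hom G L) (c : nat -> G) w :
  psi (idx_eval c w) = idx_eval (fun i => psi (c i)) w.
Proof.
  induction w as [|[i s] w IH]; [apply morph1|].
  rewrite !idx_eval_cons, hmul, IH, morph_letter_val. reflexivity.
Qed.

Lemma idx_eval_ext {G : Grp} p (c c' : nat -> G) w :
  (forall i, (i < p)%nat -> c i = c' i) ->
  Forall (fun l => (fst l < p)%nat) w -> idx_eval c w = idx_eval c' w.
Proof.
  intros Hc HF. induction HF as [|[i s] w Hi HF IH]; [reflexivity|].
  rewrite !idx_eval_cons, IH. simpl in *. rewrite (Hc i Hi). reflexivity.
Qed.

Lemma idx_eval_app {G : Grp} (c : nat -> G) u v :
  idx_eval c (u ++ v) = gmul (idx_eval c u) (idx_eval c v).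
Proof.
  induction u as [|l u IH].
  - symmetry. apply gmul1l.
  - simpl app. rewrite !idx_eval_cons, IH. apply gmulA.
Qed.

Definition inv_word w : list (nat * bool) :=
  rev (map (fun l => (fst l, negb (snd l))) w).

Lemma idx_eval_inv_word {G : Grp} (c : nat -> G) w :
  idx_eval c (inv_word w) = ginv (idx_eval c w).
Proof.
  induction w as [|[i s] w IH]; [symmetry; apply invg1|].
  unfold inv_word in *. simpl map. simpl rev.
  rewrite idx_eval_app, IH, (idx_eval_cons c (i, s) w), invMg, idx_eval_cons.
  change (idx_eval c nil) with (@gone G). rewrite mulg1.
  unfold letter_val. destruct s; simpl; rewrite ?invgK; reflexivity.
Qed.

Lemma Forall_inv_word (P : nat -> Prop) w :
  Forall (fun l => P (fst l)) w -> Forall (fun l => P (fst l)) (inv_word w).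
Proof.
  intro HF. apply Forall_rev. induction HF; simpl; constructor; assumption.
Qed.

Definition cancels (l l' : nat * bool) : bool :=
  Nat.eqb (fst l) (fst l') && negb (Bool.eqb (snd l) (snd l')).

Fixpoint reduce w : list (nat * bool) :=
  match w with
  | nil => nil
  | l :: w' =>
      match reduce w' with
      | nil => l :: nil
      | l' :: r => if cancels l l' then r else l :: l' :: r
      end
  end.

Lemma reduced_tail l w : reduced (l :: w) -> reduced w.
Proof. destruct l, w as [|[j c] w]; simpl; tauto. Qed.

Lemma reduce_reduced w : reduced (reduce w).
Proof.
  induction w as [|l w IH]; [exact I|]. simpl.
  destruct (reduce w) as [|l' r]; [destruct l; exact I|].
  destruct (cancels l l') eqn:C; [exact (reduced_tail _ _ IH)|].
  destruct l as [i s], l' as [j t]. split; [|exact IH].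
  intros [-> Hst]. unfold cancels in C. simpl in C. rewrite Nat.eqb_refl in C.
  destruct s, t; simpl in C; congruence.
Qed.

Lemma reduce_Forall (P : nat * bool -> Prop) w : Forall P w -> Forall P (reduce w).
Proof.
  induction 1 as [|l w Hl HF IH]; simpl; [constructor|].
  destruct (reduce w) as [|l' r]; [constructor; auto|].
  inversion IH; subst. destruct (cancels l l'); auto.
Qed.

Lemma idx_eval_reduce {G : Grp} (c : nat -> G) w : idx_eval c (reduce w) = idx_eval c w.
Proof.
  induction w as [|l w IH]; [reflexivity|]. simpl reduce.
  rewrite idx_eval_cons, <- IH.
  destruct (reduce w) as [|l' r]; [reflexivity|].
  destruct (cancels l l') eqn:C; [|reflexivity].
  rewrite idx_eval_cons, gmulA.
  destruct l as [i s], l' as [j t]. unfold cancels in C; simpl in C.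
  apply andb_prop in C as [Hij Hst]. apply Nat.eqb_eq in Hij. subst j.
  unfold letter_val. destruct s, t; simpl in Hst |- *; try discriminate.
  - rewrite mulgV, gmul1l. reflexivity.
  - rewrite gmulVl, gmul1l. reflexivity.
Qed.

Lemma free_family_idx_eval_eq {G L : Grp} p (d : nat -> G) (c : nat -> L) u v :
  free_family p d ->
  Forall (fun l => (fst l < p)%nat) u -> Forall (fun l => (fst l < p)%nat) v ->
  idx_eval d u = idx_eval d v -> idx_eval c u = idx_eval c v.
Proof.
  intros Hfree Hu Hv Huv.
  set (w := u ++ inv_word v).
  assert (Hw : Forall (fun l => (fst l < p)%nat) w).
  { apply Forall_app. split; [assumption|].
    exact (Forall_inv_word (fun i => (i < p)%nat) v Hv). }
  assert (Hred : reduce w = nil).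
  { apply Hfree; [apply reduce_Forall; assumption | apply reduce_reduced |].
    unfold w. rewrite idx_eval_reduce, idx_eval_app, idx_eval_inv_word, Huv.
    apply mulgV. }
  assert (Hcw : idx_eval c w = gone) by (rewrite <- idx_eval_reduce, Hred; reflexivity).
  unfold w in Hcw. rewrite idx_eval_app, idx_eval_inv_word in Hcw.
  rewrite <- (invgK L (idx_eval c v)). exact (ginv_unique L _ _ Hcw).
Qed.

Lemma family_word_idx {G : Grp} p (c : nat -> G) (w : list (G * bool)) :
  Forall (fun l => set_of_family p c (fst l)) w ->
  exists wi, Forall (fun l => (fst l < p)%nat) wi /\ length wi = length w /\
             word_eval w = idx_eval c wi.
Proof.
  induction 1 as [|[u s] w [i [Hi Hu]] HF [wi [Hwi [Hlen Hval]]]].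
  - exists nil. repeat split; constructor.
  - exists ((i, s) :: wi). simpl in Hu. subst u. repeat split.
    + constructor; assumption.
    + simpl. congruence.
    + simpl. rewrite Hval. reflexivity.
Qed.

Lemma idx_eval_word_reach {G : Grp} p (c : nat -> G) (S : G -> Prop) wi :
  (forall i, (i < p)%nat -> S (c i)) ->
  Forall (fun l => (fst l < p)%nat) wi -> word_reach S (idx_eval c wi) (length wi).
Proof.
  intros HS HF. exists (map (fun l => (c (fst l), snd l)) wi).
  split; [apply length_map|]. split; [|reflexivity].
  induction HF as [|l wi Hl HF IH]; simpl; constructor; [apply HS, Hl | exact IH].
Qed.

End IndexWords.

Lemma free_image_word_lift {G L : Grp} (psi : Hom G L) p (a : nat -> G) (d : nat -> L)
    (S : G -> Prop) g k :
  free_family p d ->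
  (forall i, (i < p)%nat -> psi (a i) = d i) ->
  (forall i, (i < p)%nat -> S (a i)) ->
  in_gen (set_of_family p a) g ->
  word_reach (set_of_family p d) (psi g) k -> word_reach S g k.
Proof.
  intros Hfree Hpsi HS [m [w [_ [Hw <-]]]] [v [<- [Hv Hvval]]].
  destruct (family_word_idx p a w Hw) as [wi [Hwi [_ Hwval]]].
  destruct (family_word_idx p d v Hv) as [vi [Hvi [<- Hvival]]].
  rewrite Hwval in Hvval |- *.
  rewrite (free_family_idx_eval_eq p d a wi vi Hfree Hwi Hvi).
  - exact (idx_eval_word_reach p a S vi HS Hvi).
  - rewrite <- Hvival, Hvval, idx_eval_morph. symmetry.
    exact (idx_eval_ext p _ _ wi Hpsi Hwi).
Qed.

Lemma G1_retraction (H : Grp) (T : H -> Prop) p (d : nat -> H)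
    (G1 : Grp) (iota : Hom H G1) (X Y Z : nat -> G1) (s1 : G1) :
  (forall i, (i < p)%nat -> T (d i)) ->
  is_G1 H p d G1 iota X Y Z s1 ->
  exists psi : Hom G1 H,
    (forall i, (i < p)%nat -> psi (gmul (X i) (Z i)) = d i) /\
    (forall i, (i < p)%nat -> psi (gmul (Y i) (Z i)) = gone) /\
    (forall u, S1_set T p iota X Y Z s1 u -> T (psi u) \/ psi u = gone).
Proof.
  intros HdT [_ Huniv].
  set (idH := {| hfun := fun h : H => h; hmul := fun _ _ => eq_refl |} : Hom H H).
  destruct (Huniv H idH d (fun _ => gone) (fun _ => gone) gone)
    as [[psi [Hiota [HXYZ Hs1]]] _].
  { repeat split; intros; simpl; rewrite ?invg1, ?mulg1, ?gmul1l; reflexivity. }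
  simpl in Hiota.
  exists psi. split; [|split].
  - intros i Hi. destruct (HXYZ i Hi) as [HX [_ HZ]]. rewrite hmul, HX, HZ. apply mulg1.
  - intros i Hi. destruct (HXYZ i Hi) as [_ [HY HZ]]. rewrite hmul, HY, HZ. apply gmul1l.
  - intros u [[t [Ht ->]] | [[i [Hi Hu]] | ->]]; [left; rewrite Hiota; exact Ht | | right; exact Hs1].
    destruct (HXYZ i Hi) as [HX [HY HZ]].
    destruct Hu as [-> | [-> | [-> | [-> | ->]]]]; rewrite ?hmul, ?HX, ?HY, ?HZ, ?mulg1, ?gmul1l; auto.
Qed.

Theorem lemma3p7
  (* H finitely presented, finite generating set T *)
  (H : Grp) (T : H -> Prop) (HfpT : fin_presented H T)
  (* free subgroup F of rank p with free basis R = {d_1..d_p} ⊂ T *)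
  (p : nat) (d : nat -> H)
  (HdT : forall i, (i < p)%nat -> T (d i))
  (Hfree : free_family p d)
  (* Dist_F^H and its linear interpolation *)
  (D : nat -> nat) (HD : is_dist T (set_of_family p d) D)
  (* Delta, f = Delta^{-1} *)
  (Delta f : R -> R)
  (HDmono : forall r s, 0 <= r -> r <= s -> Delta r <= Delta s)
  (HDpos : forall r, 0 <= r -> 0 <= Delta r)
  (Hfpos : forall y, 0 <= y -> 0 <= f y)
  (HfD : forall r, 0 <= r -> f (Delta r) = r)
  (HDf : forall y, 0 <= y -> Delta (f y) = y)
  (HDlip : lip_equiv Delta (interp D))
  (HDge : forall r, 1 <= r -> r <= Delta r)
  (HfRT : forall (g : H) (k n : nat), in_gen (set_of_family p d) g ->
            word_len (set_of_family p d) g k -> word_len T g n ->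
            f (INR k) <= INR n)
  (* the group G_1 *)
  (G1 : Grp) (iota : Hom H G1) (X Y Z : nat -> G1) (s1 : G1)
  (HG1 : is_G1 H p d G1 iota X Y Z s1) :
  let a := fun i => gmul (X i) (Z i) in
  let b := fun i => gmul (Y i) (Z i) in
  let S1 := S1_set T p iota X Y Z s1 in
  forall (g0 g1 : G1),
    in_gen (set_of_family p a) g0 ->
    in_gen (set_of_family p b) g1 ->
    forall n0 n : nat,
      word_len S1 g0 n0 ->
      word_len S1 (gmul (ginv g1) g0) n ->
      INR n >= f (INR n0).
Proof.
  intros a b S1 g0 g1 Hg0 Hg1 n0 n [_ Hn0min] [Hn _].
  destruct (G1_retraction H T p d G1 iota X Y Z s1 HdT HG1) as [psi [Hpa [Hpb HpS1]]].
  assert (Hpg1 : psi g1 = gone).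
  { apply (morph_in_gen_trivial _ _ psi (set_of_family p b)); [|assumption].
    intros u [i [Hi ->]]. exact (Hpb i Hi). }
  assert (Hh : psi (gmul (ginv g1) g0) = psi g0)
    by (rewrite hmul, morphV, Hpg1, invg1; apply gmul1l).
  destruct (morph_word_len_le _ _ psi S1 T _ n HpS1 Hn) as [m [Hmn Hm]].
  rewrite Hh in Hm.
  destruct (word_len_exists T (psi g0) m Hm) as [nT [HnT HnTm]].
  destruct Hg0 as [l0 Hl0].
  assert (HpR : forall u, set_of_family p a u -> set_of_family p d (psi u) \/ psi u = gone)
    by (intros u [i [Hi ->]]; left; exists i; split; [exact Hi | exact (Hpa i Hi)]).
  destruct (morph_word_len_le _ _ psi _ _ g0 l0 HpR Hl0) as [l [_ Hl]].
  destruct (word_len_exists _ (psi g0) l Hl) as [k [Hk _]].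
  assert (Hn0k : (n0 <= k)%nat).
  { apply Hn0min, (free_image_word_lift psi p a d S1 g0 k Hfree Hpa).
    - intros i Hi. right. left. exists i. split; [assumption | do 3 right; left; reflexivity].
    - exists l0. assumption.
    - apply Hk. }
  assert (f (INR k) <= INR nT) by (apply (HfRT (psi g0)); [exists l | |]; assumption).
  assert (f (INR n0) <= f (INR k))
    by (apply (inverse_nondecreasing Delta f HDmono Hfpos HDf);
        [apply pos_INR | apply le_INR; assumption]).
  assert (INR nT <= INR n) by (apply le_INR; lia).
  lra.
Qed.
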